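(* Let $G \ge 2$ and $p_t \in (0,1)$. Let $r_{t,1},\dots,r_{t,G}$ be i.i.d. $\mathrm{Bernoulli}(p_t)$, $R=\sum_{j} r_{t,j}$, $\hat p_t=R/G$, $\hat A_{t,i}=r_{t,i}-\hat p_t$, $A_{t,i}=r_{t,i}-p_t$, and $\mathcal S=\{1\le R\le G-1\}$. Then for every $i\in[G]$, \[ \mathbb E\!\left[A_{t,i}-\hat A_{t,i}\mid \mathcal S\right]=\frac{p_t(1-p_t)^G+p_t^{G+1}-p_t^G}{1-(1-p_t)^G-p_t^G}. \]
   Context: $\hat A_{t,i}$ is the group-relative advantage with group baseline $\hat p_t$; $A_{t,i}$ is the expected advantage; $\mathcal S$ is the event that not all rewards in the group are equal. *)

From HB Require Import structures.
From mathcomp Require Import all_boot all_order all_algebra.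
Set Implicit Arguments. Unset Strict Implicit. Unset Printing Implicit Defensive.
Import Order.TTheory GRing.Theory Num.Theory.
Local Open Scope ring_scope.

Section Defs.
Variables (R : realFieldType) (G : nat).

Definition outcome := {ffun 'I_G -> bool}.

Definition iid_bernoulli (p : R) (w : outcome) : R :=
  \prod_(j < G) (if w j then p else 1 - p).

Definition reward (i : 'I_G) (w : outcome) : R := (w i)%:R.

Definition nsucc (w : outcome) : nat := \sum_(j < G) (w j : nat).

Definition phat (w : outcome) : R := (nsucc w)%:R / G%:R.

Definition Ahat (i : 'I_G) (w : outcome) : R := reward i w - phat w.

Definition Aexp (p : R) (i : 'I_G) (w : outcome) : R := reward i w - p.

Definition eventS (w : outcome) : bool := (1 <= nsucc w <= G - 1)%N.

Definition cond_expect (P : outcome -> R) (S : pred outcome) (X : outcome -> R) : R :=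
  (\sum_(w | S w) P w * X w) / (\sum_(w | S w) P w).

End Defs.

(* The gap A_i - Ahat_i = phat - p does not depend on i, and phat is an
   unbiased estimator of p, so E[(phat - p) 1_S] = - E[(phat - p) 1_{not S}].
   Off S the group is either all failures (phat = 0, probability (1-p)^G) or
   all successes (phat = 1, probability p^G), which gives the numerator
   p (1-p)^G - (1-p) p^G; the denominator is P(S) = 1 - (1-p)^G - p^G. *)
From HB Require Import structures.
From mathcomp Require Import all_boot all_order all_algebra.
From mathcomp Require Import ring zify.
Import Order.TTheory GRing.Theory Num.Theory.
Local Open Scope ring_scope.

Lemma sum_ffun_bool_prod {R : comPzSemiRingType} {I : finType}
    (F : I -> bool -> R) :
  \sum_(w : {ffun I -> bool}) \prod_j F j (w j) = \prod_j (F j true + F j false).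
Proof. by rewrite -bigA_distr_bigA; apply: eq_bigr => j _; rewrite big_bool. Qed.

Lemma eq_ffun_constE (I : finType) (T : eqType) (w : {ffun I -> T}) (b : T) :
  (w == [ffun=> b]) = [forall j, w j == b].
Proof.
apply/eqP/forallP => [-> j | wb]; first by rewrite ffunE.
by apply/ffunP => j; rewrite ffunE; apply/eqP.
Qed.

Section IidBernoulli.
Variables (R : realFieldType) (G : nat).
Implicit Types (p : R) (w : outcome G).

Lemma iid_bernoulli_sum1 p : \sum_(w : outcome G) iid_bernoulli p w = 1.
Proof.
rewrite (sum_ffun_bool_prod (fun _ b => if b then p else 1 - p)).
by rewrite big1 // => j _; rewrite subrKC.
Qed.

Lemma iid_bernoulli_mean_reward p (j : 'I_G) :
  \sum_(w : outcome G) iid_bernoulli p w * reward R j w = p.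
Proof.
pose F k (b : bool) := (if b then p else 1 - p) * (if k == j then b%:R else 1).
transitivity (\sum_(w : outcome G) \prod_k F k (w k)).
  apply: eq_bigr => w _; rewrite big_split /=; congr (_ * _).
  by rewrite (bigD1 j) //= eqxx big1 ?mulr1 // => k /negbTE ->.
rewrite sum_ffun_bool_prod (bigD1 j) //= big1 => [|k /negbTE kj].
  by rewrite /F eqxx mulr1 mulr0 addr0 mulr1.
by rewrite /F kj !mulr1 subrKC.
Qed.

Lemma iid_bernoulli_mean_phat p : (0 < G)%N ->
  \sum_(w : outcome G) iid_bernoulli p w * phat R w = p.
Proof.
move=> G_gt0; have G_neq0 : G%:R != 0 :> R by rewrite pnatr_eq0 -lt0n.
transitivity
  ((\sum_(j < G) \sum_(w : outcome G) iid_bernoulli p w * reward R j w) / G%:R).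
  rewrite exchange_big mulr_suml; apply: eq_bigr => w _.
  by rewrite /phat /nsucc natr_sum -mulr_sumr mulrA.
rewrite (eq_bigr _ (fun j _ => iid_bernoulli_mean_reward p j)).
by rewrite sumr_const card_ord -[p *+ G]mulr_natr mulfK.
Qed.

Lemma iid_bernoulli_const p (b : bool) :
  iid_bernoulli p ([ffun=> b] : outcome G) = (if b then p else 1 - p) ^+ G.
Proof.
rewrite /iid_bernoulli (eq_bigr (fun=> if b then p else 1 - p)) => [|j _].
  by rewrite prodr_const card_ord.
by rewrite ffunE.
Qed.

Lemma nsucc_const (b : bool) :
  nsucc ([ffun=> b] : outcome G) = if b then G else 0%N.
Proof.
rewrite /nsucc (eq_bigr (fun=> nat_of_bool b)) => [|j _]; last by rewrite ffunE.
by rewrite sum_nat_const card_ord; case: b; rewrite ?muln1 ?muln0.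
Qed.

Lemma nsucc_eq0 w : (nsucc w == 0%N) = (w == [ffun=> false]).
Proof. by rewrite sum_nat_eq0 eq_ffun_constE; apply: eq_forallb => j; case: (w j). Qed.

Lemma nsucc_add_nfail w : (nsucc w + \sum_(j < G) ~~ w j)%N = G.
Proof.
rewrite -big_split /= (eq_bigr (fun=> 1%N)) => [|j _]; last by case: (w j).
by rewrite sum_nat_const card_ord muln1.
Qed.

Lemma nsucc_eqG w : (nsucc w == G) = (w == [ffun=> true]).
Proof.
rewrite -{2}(nsucc_add_nfail w) -{1}[nsucc w]addn0 eqn_add2l eq_sym.
by rewrite sum_nat_eq0 eq_ffun_constE; apply: eq_forallb => j; case: (w j).
Qed.

Lemma eventSN w : ~~ eventS w = (w == [ffun=> false]) || (w == [ffun=> true]).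
Proof.
rewrite -nsucc_eq0 -nsucc_eqG /eventS; have := nsucc_add_nfail w.
by move: (nsucc w) (\sum_(j < G) _) => n m; lia.
Qed.

Lemma sum_eventS (F : outcome G -> R) : (0 < G)%N ->
  \sum_(w | eventS w) F w
  = \sum_(w : outcome G) F w - F [ffun=> false] - F [ffun=> true].
Proof.
move=> G_gt0; have false_neq_true : [ffun=> false] != [ffun=> true] :> outcome G.
  by apply/eqP => /ffunP /(_ (Ordinal G_gt0)); rewrite !ffunE.
have -> : \sum_(w : outcome G) F w
    = \sum_(w | eventS w) F w + F [ffun=> false] + F [ffun=> true].
  rewrite (bigID (@eventS G)) /= -addrA; congr (_ + _).
  rewrite (eq_bigl _ _ eventSN) (bigD1 [ffun=> false]) ?eqxx //=.
  rewrite (bigD1 [ffun=> true]) ?eqxx ?orbT 1?eq_sym //= big1 ?addr0 // => w.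
  by case: (w =P [ffun=> false]) => [->|]; case: eqP.
by rewrite addrAC !addrK.
Qed.

End IidBernoulli.

Theorem lemma2 (R : realFieldType) (G : nat) (p : R) (i : 'I_G) :
  (2 <= G)%N -> 0 < p -> p < 1 ->
  cond_expect (iid_bernoulli p) (@eventS G)
    (fun w => Aexp p i w - @Ahat R G i w)
  = (p * (1 - p) ^+ G + p ^+ G.+1 - p ^+ G) / (1 - (1 - p) ^+ G - p ^+ G).
Proof.
move=> G_ge2 _ _; have G_gt0 : (0 < G)%N by apply: leq_trans G_ge2.
have gapE w : Aexp p i w - Ahat R i w = phat R w - p.
  by rewrite /Aexp /Ahat opprB addrC addrA subrK.
have phat_centered : \sum_(w : outcome G) iid_bernoulli p w * (phat R w - p) = 0.
  under eq_bigr do rewrite mulrBr.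
  by rewrite sumrB iid_bernoulli_mean_phat // -mulr_suml iid_bernoulli_sum1 mul1r subrr.
rewrite /cond_expect; under eq_bigr do rewrite gapE.
rewrite !sum_eventS // phat_centered iid_bernoulli_sum1 !iid_bernoulli_const.
rewrite /phat !nsucc_const mul0r divff ?pnatr_eq0 -?lt0n //.
by congr (_ / _); rewrite exprS; ring.
Qed.
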